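(* Let $a<b$ and let $A\in M_2(C[a,b])$ be such that $A(t)$ is hermitian for every $t\in[a,b]$ and $A$ is continuously differentiable on $[a,b]$ (entrywise). Suppose that $A(t)$ has two distinct eigenvalues for all $t\in[a,b]$ except possibly at finitely many points, and that at each such exceptional point $t$ the derivative $A'(t)$ has two distinct eigenvalues. Then there exists $U\in M_2(C[a,b])$ with $U(t)$ unitary for every $t\in[a,b]$ such that $U(t)^*A(t)U(t)$ is diagonal for all $t\in[a,b]$.
   Context: $C[a,b]$ denotes the continuous complex-valued functions on $[a,b]$; $M_2(C[a,b])$ the $2\times2$ matrices over it, viewed as continuous maps $[a,b]\to M_2(\mathbb{C})$. $A'(t)$ denotes the entrywise derivative. *)

From Stdlib Require Import Reals List.
Open Scope R_scope.

Record Cpx := mkC { re : R ; im : R }.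

Definition C0 : Cpx := mkC 0 0.
Definition C1 : Cpx := mkC 1 0.
Definition Cadd (z w : Cpx) : Cpx := mkC (re z + re w) (im z + im w).
Definition Cmul (z w : Cpx) : Cpx :=
  mkC (re z * re w - im z * im w) (re z * im w + im z * re w).
Definition Cconj (z : Cpx) : Cpx := mkC (re z) (- im z).

Record M2 := mkM2 { e11 : Cpx ; e12 : Cpx ; e21 : Cpx ; e22 : Cpx }.

Definition M2mul (X Y : M2) : M2 :=
  mkM2 (Cadd (Cmul (e11 X) (e11 Y)) (Cmul (e12 X) (e21 Y)))
       (Cadd (Cmul (e11 X) (e12 Y)) (Cmul (e12 X) (e22 Y)))
       (Cadd (Cmul (e21 X) (e11 Y)) (Cmul (e22 X) (e21 Y)))
       (Cadd (Cmul (e21 X) (e12 Y)) (Cmul (e22 X) (e22 Y))).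

Definition M2id : M2 := mkM2 C1 C0 C0 C1.

Definition M2adj (X : M2) : M2 :=
  mkM2 (Cconj (e11 X)) (Cconj (e21 X)) (Cconj (e12 X)) (Cconj (e22 X)).

Definition hermitian (X : M2) : Prop := M2adj X = X.
Definition unitary (X : M2) : Prop := M2mul (M2adj X) X = M2id.
Definition diagonal (X : M2) : Prop := e12 X = C0 /\ e21 X = C0.

Definition eigenvalue (X : M2) (lam : Cpx) : Prop :=
  exists v1 v2 : Cpx, (v1 <> C0 \/ v2 <> C0) /\
    Cadd (Cmul (e11 X) v1) (Cmul (e12 X) v2) = Cmul lam v1 /\
    Cadd (Cmul (e21 X) v1) (Cmul (e22 X) v2) = Cmul lam v2.

Definition two_distinct_eigenvalues (X : M2) : Prop :=
  exists l1 l2 : Cpx, l1 <> l2 /\ eigenvalue X l1 /\ eigenvalue X l2.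

Definition Rcont_on (a b : R) (f : R -> R) : Prop :=
  forall t, a <= t <= b -> forall eps, 0 < eps -> exists delta, 0 < delta /\
    forall s, a <= s <= b -> Rabs (s - t) < delta -> Rabs (f s - f t) < eps.

Definition Rderiv_on (a b : R) (f f' : R -> R) : Prop :=
  forall t, a <= t <= b -> forall eps, 0 < eps -> exists delta, 0 < delta /\
    forall s, a <= s <= b -> s <> t -> Rabs (s - t) < delta ->
      Rabs ((f s - f t) / (s - t) - f' t) < eps.

Definition Ccont_on (a b : R) (f : R -> Cpx) : Prop :=
  Rcont_on a b (fun t => re (f t)) /\ Rcont_on a b (fun t => im (f t)).

Definition Cderiv_on (a b : R) (f f' : R -> Cpx) : Prop :=
  Rderiv_on a b (fun t => re (f t)) (fun t => re (f' t)) /\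
  Rderiv_on a b (fun t => im (f t)) (fun t => im (f' t)).

Definition M2cont_on (a b : R) (A : R -> M2) : Prop :=
  Ccont_on a b (fun t => e11 (A t)) /\ Ccont_on a b (fun t => e12 (A t)) /\
  Ccont_on a b (fun t => e21 (A t)) /\ Ccont_on a b (fun t => e22 (A t)).

Definition M2deriv_on (a b : R) (A A' : R -> M2) : Prop :=
  Cderiv_on a b (fun t => e11 (A t)) (fun t => e11 (A' t)) /\
  Cderiv_on a b (fun t => e12 (A t)) (fun t => e12 (A' t)) /\
  Cderiv_on a b (fun t => e21 (A t)) (fun t => e21 (A' t)) /\
  Cderiv_on a b (fun t => e22 (A t)) (fun t => e22 (A' t)).

(* A hermitian 2x2 matrix is A = s I + sigma(f) with s its half-trace and
   sigma(f) = [[f1, f2 + i f3], [f2 - i f3, -f1]] its traceless part, f in R^3;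
   A has a repeated eigenvalue exactly when f = 0.  The proof has three parts.
   1. Direction field.  The zeros of f(t) are among the finitely many exceptional
      points, and there f'(t) <> 0 since A'(t) is hermitian and not scalar.  Dividing
      f by prod_z (t - z) over the zeros removes them (at a zero z the quotient
      tends to f'(z) / prod_{z' <> z} (z - z') <> 0), so f = mu m with
      m : [a,b] -> S^2 continuous (direction_field).
   2. Path lifting.  sigma(m) has eigenvalues +-1; the normalized projection
      w |-> (1 + sigma(m)) w / |(1 + sigma(m)) w| carries a +1-eigenvector of
      sigma(m(c)) to one of sigma(m(s)) as long as m(s) stays close to m(c).  By
      uniform continuity finitely many such steps, glued together, give a continuous
      unit eigenvector field (u, v) of sigma(m) on [a,b] (eigen_frame_exists).
   3. U = [[u, -conj v], [v, conj u]] is unitary and diagonalizes s I + mu sigma(m). *)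
From Stdlib Require Import Reals List Lra Psatz Classical.
From Coquelicot Require Import Coquelicot.
Open Scope R_scope.

Definition lim_in (D : R -> Prop) (t : R) (f : R -> R) (L : R) : Prop :=
  filterlim f (within D (locally t)) (locally L).

Lemma lim_in_eps D t f L : lim_in D t f L <-> forall eps, 0 < eps -> exists delta, 0 < delta /\
   forall s, D s -> Rabs (s - t) < delta -> Rabs (f s - L) < eps.
Proof.
unfold lim_in; rewrite filterlim_locally; split.
- intros H eps Heps. destruct (H (mkposreal eps Heps)) as [d Hd].
  exists d; split; [apply cond_pos|]. intros s Ds Hs. exact (Hd s Hs Ds).
- intros H eps. destruct (H eps (cond_pos eps)) as [d [Hd H']].
  exists (mkposreal d Hd). intros s Hs Ds. exact (H' s Ds Hs).
Qed.

Lemma lim_in_plus D t f g L1 L2 : lim_in D t f L1 -> lim_in D t g L2 ->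
  lim_in D t (fun s => f s + g s) (L1 + L2).
Proof.
intros H1 H2. apply (filterlim_comp_2 f g Rplus H1 H2).
exact (filterlim_Rbar_plus (Finite L1) (Finite L2) (Finite (L1 + L2)) eq_refl).
Qed.

Lemma lim_in_mult D t f g L1 L2 : lim_in D t f L1 -> lim_in D t g L2 ->
  lim_in D t (fun s => f s * g s) (L1 * L2).
Proof.
intros H1 H2. apply (filterlim_comp_2 f g Rmult H1 H2).
exact (filterlim_Rbar_mult (Finite L1) (Finite L2) (Finite (L1 * L2)) eq_refl).
Qed.

Lemma lim_in_comp D t f L g : lim_in D t f L -> continuity_pt g L ->
  lim_in D t (fun s => g (f s)) (g L).
Proof.
intros H1 H2. apply continuity_pt_filterlim in H2.
exact (filterlim_comp _ _ _ f g _ _ _ H1 H2).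
Qed.

Lemma lim_in_const D t c : lim_in D t (fun _ => c) c.
Proof.
apply lim_in_eps. intros eps He; exists 1; split; [lra|]. intros.
rewrite Rminus_diag, Rabs_R0; exact He.
Qed.

Lemma lim_in_id D t : lim_in D t (fun s => s) t.
Proof. apply lim_in_eps. intros eps He; exists eps; split; auto. Qed.

Lemma lim_in_opp D t f L : lim_in D t f L -> lim_in D t (fun s => - f s) (- L).
Proof.
intro H. apply (lim_in_comp _ _ _ _ Ropp H), continuity_pt_opp, continuity_pt_id.
Qed.

Lemma lim_in_minus D t f g L1 L2 : lim_in D t f L1 -> lim_in D t g L2 ->
  lim_in D t (fun s => f s - g s) (L1 - L2).
Proof. intros; apply lim_in_plus; [|apply lim_in_opp]; assumption. Qed.

Lemma lim_in_inv D t f L : lim_in D t f L -> L <> 0 -> lim_in D t (fun s => / f s) (/ L).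
Proof.
intros H HL. apply (lim_in_comp _ _ _ _ Rinv H).
apply continuity_pt_inv; [apply continuity_pt_id | exact HL].
Qed.

Lemma lim_in_div D t f g L1 L2 : lim_in D t f L1 -> lim_in D t g L2 -> L2 <> 0 ->
  lim_in D t (fun s => f s / g s) (L1 / L2).
Proof. intros; apply lim_in_mult; [|apply lim_in_inv]; assumption. Qed.

Lemma lim_in_sqrt D t f L : lim_in D t f L -> 0 < L ->
  lim_in D t (fun s => sqrt (f s)) (sqrt L).
Proof. intros H HL. apply (lim_in_comp _ _ _ _ sqrt H), continuity_pt_sqrt; lra. Qed.

Lemma lim_in_ext_loc D t f g L :
  (exists d, 0 < d /\ forall s, D s -> Rabs (s - t) < d -> f s = g s) ->
  lim_in D t f L -> lim_in D t g L.
Proof.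
intros [d0 [Hd0 Hfg]] H. rewrite lim_in_eps in *. intros eps He.
destruct (H eps He) as [d [Hd H']]. exists (Rmin d d0); split; [apply Rmin_pos; auto|].
intros s Ds Hs. pose proof (Rmin_l d d0); pose proof (Rmin_r d d0).
rewrite <- Hfg by (auto; lra). apply H'; auto; lra.
Qed.

Lemma lim_in_ext D t f g L : (forall s, D s -> f s = g s) -> lim_in D t f L -> lim_in D t g L.
Proof. intros H; apply lim_in_ext_loc. exists 1; split; [lra|auto]. Qed.

Lemma lim_in_punctured D t f : lim_in (fun s => D s /\ s <> t) t f (f t) -> lim_in D t f (f t).
Proof.
rewrite !lim_in_eps. intros H eps He; destruct (H eps He) as [d [Hd H']].
exists d; split; auto. intros s Ds Hs. destruct (Req_dec s t) as [->|Hst].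
- rewrite Rminus_diag, Rabs_R0; exact He.
- apply H'; auto.
Qed.

Lemma lim_in_unique D t f L1 L2 : lim_in D t f L1 -> lim_in D t f L2 ->
  (forall d, 0 < d -> exists s, D s /\ Rabs (s - t) < d) -> L1 = L2.
Proof.
intros H1 H2 Hd. rewrite lim_in_eps in *. destruct (Req_dec L1 L2) as [|Hne]; auto.
exfalso. set (e := Rabs (L1 - L2) / 2).
assert (He : 0 < e) by (apply Rdiv_lt_0_compat; [apply Rabs_pos_lt; lra | lra]).
destruct (H1 e He) as [d1 [Hd1 H1']]. destruct (H2 e He) as [d2 [Hd2 H2']].
destruct (Hd (Rmin d1 d2)) as [s [Ds Hs]]; [apply Rmin_pos; auto|].
pose proof (Rmin_l d1 d2); pose proof (Rmin_r d1 d2).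
assert (A1 := H1' s Ds ltac:(lra)). assert (A2 := H2' s Ds ltac:(lra)).
assert (Rabs (L1 - L2) <= Rabs (f s - L2) + Rabs (f s - L1)).
{ replace (L1 - L2) with ((f s - L2) + - (f s - L1)) by ring.
  eapply Rle_trans; [apply Rabs_triang|]. rewrite Rabs_Ropp. lra. }
unfold e in *. lra.
Qed.

Ltac lim_tac := repeat match goal with
| |- lim_in _ _ (fun s => _ - _) _ => apply lim_in_minus
| |- lim_in _ _ (fun s => _ + _) _ => apply lim_in_plus
| |- lim_in _ _ (fun s => _ * _) _ => apply lim_in_mult
| |- lim_in _ _ (fun s => - _) _ => apply lim_in_opp
| |- lim_in _ _ (fun _ => ?c) _ => apply lim_in_const
| H : lim_in ?D ?t ?f _ |- lim_in ?D ?t (fun s => ?f s) _ => exact H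
| H : lim_in ?D ?t ?f _ |- lim_in ?D ?t ?f _ => exact H
end.

Definition Icc (a b s : R) : Prop := a <= s <= b.

Lemma cont_iff a b f : Rcont_on a b f <-> forall t, Icc a b t -> lim_in (Icc a b) t f (f t).
Proof.
split; intros H t Ht; [apply lim_in_eps|]; intros eps He.
- destruct (H t Ht eps He) as [d [Hd H']]; exists d; split; auto.
- destruct (proj1 (lim_in_eps _ _ _ _) (H t Ht) eps He) as [d [Hd H']]; exists d; split; auto.
Qed.

Lemma deriv_iff a b f f' : Rderiv_on a b f f' <-> forall t, Icc a b t ->
  lim_in (fun s => Icc a b s /\ s <> t) t (fun s => (f s - f t) / (s - t)) (f' t).
Proof.
split; intros H t Ht; [apply lim_in_eps|]; intros eps He.
- destruct (H t Ht eps He) as [d [Hd H']]; exists d; split; auto.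
  intros s [Ds Hst] Hs; apply H'; auto.
- destruct (proj1 (lim_in_eps _ _ _ _) (H t Ht) eps He) as [d [Hd H']]; exists d; split; auto.
Qed.

Lemma Icc_adherent a b t : a < b -> Icc a b t -> forall d, 0 < d ->
  exists s, (Icc a b s /\ s <> t) /\ Rabs (s - t) < d.
Proof.
intros Hab [Ht1 Ht2] d Hd. unfold Icc.
destruct (Rlt_dec t b).
- exists (t + Rmin (d/2) (b - t)).
  assert (0 < Rmin (d/2) (b-t)) by (apply Rmin_pos; lra).
  pose proof (Rmin_l (d/2) (b-t)); pose proof (Rmin_r (d/2) (b-t)).
  split; [split; [split|]|]; try lra. rewrite Rabs_right; lra.
- exists (t - Rmin (d/2) (b - a)).
  assert (0 < Rmin (d/2) (b-a)) by (apply Rmin_pos; lra).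
  pose proof (Rmin_l (d/2) (b-a)); pose proof (Rmin_r (d/2) (b-a)).
  split; [split; [split|]|]; try lra. rewrite Rabs_left; lra.
Qed.

Lemma deriv_scal_unique a b f f' g g' k t : a < b -> Icc a b t ->
  Rderiv_on a b f f' -> Rderiv_on a b g g' ->
  (forall s, Icc a b s -> f s = k * g s) -> f' t = k * g' t.
Proof.
intros Hab Ht Hf Hg Hfg. rewrite deriv_iff in Hf, Hg.
apply (lim_in_unique (fun s => Icc a b s /\ s <> t) t (fun s => (f s - f t) / (s - t))).
- apply Hf; auto.
- apply (lim_in_ext _ _ (fun s => k * ((g s - g t) / (s - t)))).
  + intros s [Hs Hst]. rewrite !Hfg by auto. field. lra.
  + apply lim_in_mult; [apply lim_in_const | apply Hg; auto].
- intros d Hd. destruct (Icc_adherent a b t Hab Ht d Hd) as [s Hs]. exists s; auto.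
Qed.

Lemma cont_opp a b f : Rcont_on a b f -> Rcont_on a b (fun t => - f t).
Proof. rewrite !cont_iff; intros Hf t Ht. apply lim_in_opp; auto. Qed.

Lemma cont_halfdiff a b f g : Rcont_on a b f -> Rcont_on a b g ->
  Rcont_on a b (fun t => (f t - g t) / 2).
Proof.
rewrite !cont_iff; intros Hf Hg t Ht.
apply lim_in_div; [apply lim_in_minus; auto | apply lim_in_const | lra].
Qed.

Lemma deriv_halfdiff a b f f' g g' : Rderiv_on a b f f' -> Rderiv_on a b g g' ->
  Rderiv_on a b (fun t => (f t - g t) / 2) (fun t => (f' t - g' t) / 2).
Proof.
rewrite !deriv_iff; intros Hf Hg t Ht.
apply (lim_in_ext _ _ (fun s => ((f s - f t) / (s - t) - (g s - g t) / (s - t)) / 2)).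
- intros s [_ Hs]. field. lra.
- apply lim_in_div; [apply lim_in_minus; auto | apply lim_in_const | lra].
Qed.

Lemma cont_sub a b c d f : a <= c -> d <= b -> Rcont_on a b f -> Rcont_on c d f.
Proof.
intros H1 H2 H t Ht eps He. destruct (H t ltac:(lra) eps He) as [del [Hd H']].
exists del; split; auto. intros s Hs; apply H'; lra.
Qed.

Lemma cont_point a f : Rcont_on a a f.
Proof.
intros t Ht eps He; exists 1; split; [lra|]. intros s Hs _.
replace s with t by lra. rewrite Rminus_diag, Rabs_R0; exact He.
Qed.

Definition glue {T : Type} (c : R) (f g : R -> T) (s : R) : T :=
  if Rle_dec s c then f s else g s.

Lemma cont_glue {T : Type} (p : T -> R) a c e (f g : R -> T) : a <= c <= e ->
  Rcont_on a c (fun s => p (f s)) -> Rcont_on c e (fun s => p (g s)) -> p (f c) = p (g c) ->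
  Rcont_on a e (fun s => p (glue c f g s)).
Proof.
unfold glue; intros Hc Hf Hg Hfg t Ht eps He.
destruct (Rtotal_order t c) as [Hlt|[<-|Hgt]].
- destruct (Hf t ltac:(lra) eps He) as [d [Hd H']].
  exists (Rmin d (c - t)); split; [apply Rmin_pos; lra|].
  intros s Hs Hst. pose proof (Rmin_l d (c - t)); pose proof (Rmin_r d (c - t)).
  assert (s < c) by (apply Rabs_def2 in Hst; lra).
  destruct (Rle_dec s c); [|lra]. destruct (Rle_dec t c); [|lra]. apply H'; lra.
- destruct (Hf t ltac:(lra) eps He) as [d1 [Hd1 H1]].
  destruct (Hg t ltac:(lra) eps He) as [d2 [Hd2 H2]].
  exists (Rmin d1 d2); split; [apply Rmin_pos; lra|].
  intros s Hs Hst. pose proof (Rmin_l d1 d2); pose proof (Rmin_r d1 d2).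
  destruct (Rle_dec t t); [|lra]. destruct (Rle_dec s t).
  + apply H1; lra.
  + rewrite Hfg. apply H2; lra.
- destruct (Hg t ltac:(lra) eps He) as [d [Hd H']].
  exists (Rmin d (t - c)); split; [apply Rmin_pos; lra|].
  intros s Hs Hst. pose proof (Rmin_l d (t - c)); pose proof (Rmin_r d (t - c)).
  assert (c < s) by (apply Rabs_def2 in Hst; lra).
  destruct (Rle_dec s c); [lra|]. destruct (Rle_dec t c); [lra|]. apply H'; lra.
Qed.

(* The retraction of R onto [a,b]; it turns continuity on [a,b] into continuity on R. *)
Definition clamp a b s := Rmax a (Rmin s b).

Lemma clamp_in a b s : a <= b -> a <= clamp a b s <= b.
Proof. intros; unfold clamp, Rmax, Rmin. repeat destruct Rle_dec; lra. Qed.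

Lemma clamp_id a b s : a <= s <= b -> clamp a b s = s.
Proof. intros; unfold clamp, Rmax, Rmin. repeat destruct Rle_dec; lra. Qed.

Lemma clamp_lip a b x y : a <= b -> Rabs (clamp a b y - clamp a b x) <= Rabs (y - x).
Proof.
intros; unfold clamp, Rmax, Rmin.
repeat destruct Rle_dec; unfold Rabs; repeat destruct Rcase_abs; lra.
Qed.

Lemma unif_cont a b f : a <= b -> Rcont_on a b f -> forall eps, 0 < eps -> exists d, 0 < d /\
  forall s t, Icc a b s -> Icc a b t -> Rabs (s - t) < d -> Rabs (f s - f t) < eps.
Proof.
intros Hab Hf eps He.
assert (Hc : forall x, a <= x <= b -> continuity_pt (fun s => f (clamp a b s)) x).
{ intros x _. unfold continuity_pt, continue_in, limit1_in, limit_in; simpl; unfold R_dist.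
  intros e He'. destruct (Hf (clamp a b x) (clamp_in a b x Hab) e He') as [d [Hd H']].
  exists d; split; auto. intros y [_ Hy]. apply H'; [apply clamp_in; auto|].
  eapply Rle_lt_trans; [apply clamp_lip; auto | exact Hy]. }
destruct (Heine _ _ (compact_P3 a b) Hc (mkposreal eps He)) as [d Hd].
exists d; split; [apply cond_pos|]. intros s t Hs Ht Hst.
rewrite <- (clamp_id a b s), <- (clamp_id a b t) by auto. apply Hd; auto.
Qed.

(* A spinor (ur + i ui, vr + i vi) of C^2, in real coordinates. *)
Record spinor := mkS { ur : R ; ui : R ; vr : R ; vi : R }.

Lemma spinor_ext w w' :
  ur w = ur w' -> ui w = ui w' -> vr w = vr w' -> vi w = vi w' -> w = w'.
Proof. destruct w, w'; simpl; intros; subst; reflexivity. Qed.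

Definition sadd (w w' : spinor) : spinor :=
  mkS (ur w + ur w') (ui w + ui w') (vr w + vr w') (vi w + vi w').
Definition sscale (k : R) (w : spinor) : spinor :=
  mkS (k * ur w) (k * ui w) (k * vr w) (k * vi w).
Definition sdot (w w' : spinor) : R :=
  ur w * ur w' + ui w * ui w' + vr w * vr w' + vi w * vi w'.
Definition snorm2 (w : spinor) : R := sdot w w.

(* The spin matrix sigma(m) = [[m1, m2 + i m3], [m2 - i m3, -m1]] acting on spinors. *)
Definition sigma (m1 m2 m3 : R) (w : spinor) : spinor :=
  mkS (m1 * ur w + m2 * vr w - m3 * vi w) (m1 * ui w + m2 * vi w + m3 * vr w)
      (m2 * ur w + m3 * ui w - m1 * vr w) (m2 * ui w - m3 * ur w - m1 * vi w).

Definition unit3 (m1 m2 m3 : R) : Prop := m1 * m1 + m2 * m2 + m3 * m3 = 1.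

(* (1 + sigma(m)) w: twice the projection of [w] onto the +1-eigenline of sigma(m). *)
Definition eproj (m1 m2 m3 : R) (w : spinor) : spinor := sadd w (sigma m1 m2 m3 w).

(* The Bloch vector of [w]: the quadratic form w |-> <w, sigma(m) w> is linear in m. *)
Definition bloch1 w := ur w * ur w + ui w * ui w - vr w * vr w - vi w * vi w.
Definition bloch2 w := 2 * (ur w * vr w + ui w * vi w).
Definition bloch3 w := 2 * (ui w * vr w - ur w * vi w).

Lemma sdot_sigma m1 m2 m3 w :
  sdot w (sigma m1 m2 m3 w) = m1 * bloch1 w + m2 * bloch2 w + m3 * bloch3 w.
Proof. unfold sdot, sigma, bloch1, bloch2, bloch3; simpl; ring. Qed.

Lemma bloch_bounds w : snorm2 w = 1 ->
  Rabs (bloch1 w) <= 1 /\ Rabs (bloch2 w) <= 1 /\ Rabs (bloch3 w) <= 1.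
Proof.
destruct w as [x1 x2 y1 y2]; unfold snorm2, sdot, bloch1, bloch2, bloch3; simpl; intro H.
pose proof (Rle_0_sqr (x1+y1)); pose proof (Rle_0_sqr (x2+y2));
pose proof (Rle_0_sqr (x1-y1)); pose proof (Rle_0_sqr (x2-y2));
pose proof (Rle_0_sqr (x2+y1)); pose proof (Rle_0_sqr (x1+y2));
pose proof (Rle_0_sqr (x2-y1)); pose proof (Rle_0_sqr (x1-y2));
pose proof (Rle_0_sqr x1); pose proof (Rle_0_sqr x2);
pose proof (Rle_0_sqr y1); pose proof (Rle_0_sqr y2);
unfold Rsqr in *; repeat split; apply Rabs_le; split; lra.
Qed.

Lemma sigma_scale m1 m2 m3 k w :
  sigma m1 m2 m3 (sscale k w) = sscale k (sigma m1 m2 m3 w).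
Proof. apply spinor_ext; unfold sigma, sscale; simpl; ring. Qed.

(* sigma(m)^2 = |m|^2, hence (1 + sigma(m)) w is a +1-eigenvector for unit m. *)
Lemma sigma_eproj m1 m2 m3 w : unit3 m1 m2 m3 ->
  sigma m1 m2 m3 (eproj m1 m2 m3 w) = eproj m1 m2 m3 w.
Proof.
unfold unit3; intro Hm.
apply spinor_ext; unfold eproj, sadd, sigma; simpl.
- transitivity (m1 * ur w + m2 * vr w - m3 * vi w + (m1*m1+m2*m2+m3*m3) * ur w);
    [ring | rewrite Hm; ring].
- transitivity (m1 * ui w + m2 * vi w + m3 * vr w + (m1*m1+m2*m2+m3*m3) * ui w);
    [ring | rewrite Hm; ring].
- transitivity (m2 * ur w + m3 * ui w - m1 * vr w + (m1*m1+m2*m2+m3*m3) * vr w);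
    [ring | rewrite Hm; ring].
- transitivity (m2 * ui w - m3 * ur w - m1 * vi w + (m1*m1+m2*m2+m3*m3) * vi w);
    [ring | rewrite Hm; ring].
Qed.

Lemma snorm2_eproj m1 m2 m3 w : unit3 m1 m2 m3 ->
  snorm2 (eproj m1 m2 m3 w) = 2 * (snorm2 w + sdot w (sigma m1 m2 m3 w)).
Proof.
unfold unit3; intro Hm.
transitivity (snorm2 w + 2 * sdot w (sigma m1 m2 m3 w) + (m1*m1+m2*m2+m3*m3) * snorm2 w).
- unfold snorm2, sdot, eproj, sadd, sigma; simpl; ring.
- rewrite Hm; ring.
Qed.

(* If [w] is a unit +1-eigenvector of sigma(c), it stays "far from the -1-eigenline"
   of sigma(m) for every m within 1/4 of c, coordinatewise. *)
Lemma sdot_sigma_near m1 m2 m3 c1 c2 c3 w :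
  snorm2 w = 1 -> sigma c1 c2 c3 w = w ->
  Rabs (m1 - c1) < /4 -> Rabs (m2 - c2) < /4 -> Rabs (m3 - c3) < /4 ->
  / 4 < sdot w (sigma m1 m2 m3 w).
Proof.
intros Hn He H1 H2 H3.
assert (Hc : sdot w (sigma c1 c2 c3 w) = 1) by (rewrite He; exact Hn).
rewrite sdot_sigma in Hc |- *.
destruct (bloch_bounds w Hn) as [K1 [K2 K3]].
assert (Hprod : forall x y, Rabs x < /4 -> Rabs y <= 1 -> - /4 < x * y).
{ intros x y Hx Hy. assert (Rabs (x * y) < /4).
  { rewrite Rabs_mult. pose proof (Rabs_pos x); pose proof (Rabs_pos y). nra. }
  apply Rabs_def2 in H. lra. }
pose proof (Hprod _ _ H1 K1); pose proof (Hprod _ _ H2 K2); pose proof (Hprod _ _ H3 K3).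
lra.
Qed.

Lemma eproj_normalized m1 m2 m3 w : unit3 m1 m2 m3 -> 0 < snorm2 (eproj m1 m2 m3 w) ->
  let u := sscale (/ sqrt (snorm2 (eproj m1 m2 m3 w))) (eproj m1 m2 m3 w) in
  snorm2 u = 1 /\ sigma m1 m2 m3 u = u.
Proof.
intros Hm Hp u. split.
- set (Q := snorm2 (eproj m1 m2 m3 w)) in Hp, u.
  assert (Hu : snorm2 u = / sqrt Q * / sqrt Q * Q)
    by (unfold u, Q, snorm2, sdot, sscale; simpl; ring).
  rewrite Hu, <- Rinv_mult, sqrt_sqrt by lra. field. lra.
- unfold u. rewrite sigma_scale, sigma_eproj by exact Hm. reflexivity.
Qed.

Lemma eproj_fixed m1 m2 m3 w : snorm2 w = 1 -> sigma m1 m2 m3 w = w ->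
  snorm2 (eproj m1 m2 m3 w) = 4 /\
  sscale (/ sqrt (snorm2 (eproj m1 m2 m3 w))) (eproj m1 m2 m3 w) = w.
Proof.
intros Hn He. unfold eproj. rewrite He.
assert (Hn4 : snorm2 (sadd w w) = 4).
{ transitivity (4 * snorm2 w); [unfold snorm2, sdot, sadd; simpl; ring | rewrite Hn; ring]. }
split; [exact Hn4|]. rewrite Hn4. replace 4 with (2 * 2) by ring.
rewrite sqrt_square by lra. apply spinor_ext; unfold sscale, sadd; simpl; field.
Qed.

Lemma eigvec_exists m1 m2 m3 : unit3 m1 m2 m3 ->
  exists w, snorm2 w = 1 /\ sigma m1 m2 m3 w = w.
Proof.
intro Hm.
assert (Hpos : forall w, snorm2 w = 1 -> 0 < snorm2 w + sdot w (sigma m1 m2 m3 w) ->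
          exists u, snorm2 u = 1 /\ sigma m1 m2 m3 u = u).
{ intros w _ Hw. eexists. apply (eproj_normalized m1 m2 m3 w Hm).
  rewrite snorm2_eproj by exact Hm. lra. }
destruct (Rlt_dec (-1) m1).
- apply (Hpos (mkS 1 0 0 0)); unfold snorm2, sdot, sigma; simpl; lra.
- apply (Hpos (mkS 0 0 1 0)); unfold snorm2, sdot, sigma; simpl; lra.
Qed.

Definition Scont_on (a b : R) (w : R -> spinor) : Prop :=
  Rcont_on a b (fun t => ur (w t)) /\ Rcont_on a b (fun t => ui (w t)) /\
  Rcont_on a b (fun t => vr (w t)) /\ Rcont_on a b (fun t => vi (w t)).

Definition eigen_frame (a b : R) (m1 m2 m3 : R -> R) (w : R -> spinor) : Prop :=
  Scont_on a b w /\ forall t, Icc a b t ->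
    snorm2 (w t) = 1 /\ sigma (m1 t) (m2 t) (m3 t) (w t) = w t.

Lemma eigen_frame_glue a c e m1 m2 m3 w w' : a <= c <= e ->
  eigen_frame a c m1 m2 m3 w -> eigen_frame c e m1 m2 m3 w' -> w c = w' c ->
  eigen_frame a e m1 m2 m3 (glue c w w').
Proof.
intros Hc [[C1 [C2 [C3 C4]]] Hw] [[C1' [C2' [C3' C4']]] Hw'] Hj.
split; [repeat split; apply cont_glue; auto; rewrite Hj; reflexivity|].
intros t Ht. unfold glue; destruct (Rle_dec t c).
- apply Hw; unfold Icc in *; lra.
- apply Hw'; unfold Icc in *; lra.
Qed.

(* One step of path lifting: while m(s) stays within 1/4 of m(c), projecting a fixed
   eigenvector of sigma(m(c)) onto the eigenlines of sigma(m(s)) gives an eigen_frame. *)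
Lemma eigen_frame_step c e m1 m2 m3 w0 : c <= e ->
  Rcont_on c e m1 -> Rcont_on c e m2 -> Rcont_on c e m3 ->
  (forall s, Icc c e s -> unit3 (m1 s) (m2 s) (m3 s)) ->
  (forall s, Icc c e s ->
     Rabs (m1 s - m1 c) < /4 /\ Rabs (m2 s - m2 c) < /4 /\ Rabs (m3 s - m3 c) < /4) ->
  snorm2 w0 = 1 -> sigma (m1 c) (m2 c) (m3 c) w0 = w0 ->
  exists w, eigen_frame c e m1 m2 m3 w /\ w c = w0.
Proof.
intros Hce C1 C2 C3 Hm Hnear Hn He.
set (P := fun s => eproj (m1 s) (m2 s) (m3 s) w0).
set (Q := fun s => snorm2 (P s)).
assert (HQ : forall s, Icc c e s -> 0 < Q s).
{ intros s Hs. unfold Q, P. rewrite snorm2_eproj by (apply Hm; exact Hs).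
  destruct (Hnear s Hs) as [N1 [N2 N3]].
  pose proof (sdot_sigma_near _ _ _ _ _ _ w0 Hn He N1 N2 N3). lra. }
exists (fun s => sscale (/ sqrt (Q s)) (P s)). split; [split|].
- rewrite cont_iff in C1, C2, C3.
  assert (LQ : forall t, Icc c e t -> lim_in (Icc c e) t (fun s => / sqrt (Q s)) (/ sqrt (Q t))).
  { intros t Ht. pose proof (HQ t Ht).
    apply lim_in_inv; [apply lim_in_sqrt; auto | apply Rgt_not_eq, sqrt_lt_R0; auto].
    specialize (C1 t Ht); specialize (C2 t Ht); specialize (C3 t Ht).
    unfold Q, P, snorm2, sdot, eproj, sadd, sigma; simpl. lim_tac. }
  repeat split; apply cont_iff; intros t Ht; simpl; apply lim_in_mult; try (apply LQ; exact Ht);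
    specialize (C1 t Ht); specialize (C2 t Ht); specialize (C3 t Ht);
    unfold P, eproj, sadd, sigma; simpl; lim_tac.
- intros t Ht. apply (eproj_normalized _ _ _ w0 (Hm t Ht) (HQ t Ht)).
- apply (eproj_fixed _ _ _ w0 Hn He).
Qed.

Lemma eigen_frame_steps a b h m1 m2 m3 : 0 < h ->
  Rcont_on a b m1 -> Rcont_on a b m2 -> Rcont_on a b m3 ->
  (forall s, Icc a b s -> unit3 (m1 s) (m2 s) (m3 s)) ->
  (forall s t, Icc a b s -> Icc a b t -> Rabs (s - t) <= h ->
     Rabs (m1 s - m1 t) < /4 /\ Rabs (m2 s - m2 t) < /4 /\ Rabs (m3 s - m3 t) < /4) ->
  forall k, a + INR k * h <= b -> exists w, eigen_frame a (a + INR k * h) m1 m2 m3 w.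
Proof.
intros Hh C1 C2 C3 Hm Hosc. induction k as [|k IH]; intro Hk.
- simpl in *. replace (a + 0 * h) with a in * by ring.
  destruct (eigvec_exists _ _ _ (Hm a ltac:(unfold Icc; lra))) as [w0 Hw0].
  exists (fun _ => w0). split; [repeat split; apply cont_point|].
  intros t Ht. unfold Icc in Ht. replace t with a by lra. exact Hw0.
- rewrite S_INR in Hk |- *. set (c := a + INR k * h) in *.
  assert (Hc : a <= c) by (pose proof (pos_INR k); unfold c; nra).
  replace (a + (INR k + 1) * h) with (c + h) in * by (unfold c; ring).
  destruct (IH ltac:(lra)) as [w Hw].
  destruct (proj2 Hw c ltac:(unfold Icc; lra)) as [Hn He].
  assert (Hstep : exists w', eigen_frame c (c + h) m1 m2 m3 w' /\ w' c = w c).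
  { apply eigen_frame_step; auto; try lra; try (apply (cont_sub a b); auto; lra).
    - intros s Hs; apply Hm; unfold Icc in *; lra.
    - intros s Hs. apply Hosc; unfold Icc in *; try lra. rewrite Rabs_right; lra. }
  destruct Hstep as [w' [Hw' Hj]].
  exists (glue c w w'). apply eigen_frame_glue; auto; lra.
Qed.

(* Path lifting through the Hopf fibration: a continuous unit vector field m on [a,b]
   admits a continuous field of unit +1-eigenvectors of sigma(m). *)
Lemma eigen_frame_exists a b m1 m2 m3 : a < b ->
  Rcont_on a b m1 -> Rcont_on a b m2 -> Rcont_on a b m3 ->
  (forall t, Icc a b t -> unit3 (m1 t) (m2 t) (m3 t)) ->
  exists w, eigen_frame a b m1 m2 m3 w.
Proof.
intros Hab C1 C2 C3 Hm.
assert (Hq : 0 < /4) by lra.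
destruct (unif_cont a b m1 ltac:(lra) C1 _ Hq) as [d1 [Hd1 U1]].
destruct (unif_cont a b m2 ltac:(lra) C2 _ Hq) as [d2 [Hd2 U2]].
destruct (unif_cont a b m3 ltac:(lra) C3 _ Hq) as [d3 [Hd3 U3]].
set (d := Rmin d1 (Rmin d2 d3)).
assert (Hd : 0 < d) by (apply Rmin_pos; auto; apply Rmin_pos; auto).
assert (Hdd : d <= d1 /\ d <= d2 /\ d <= d3).
{ unfold d; pose proof (Rmin_l d1 (Rmin d2 d3)); pose proof (Rmin_r d1 (Rmin d2 d3)).
  pose proof (Rmin_l d2 d3); pose proof (Rmin_r d2 d3). lra. }
destruct (archimed_cor1 (d / (b - a))) as [N [HN HN0]]; [apply Rdiv_lt_0_compat; lra|].
assert (HNp : 0 < INR N) by (apply lt_0_INR; lia).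
set (h := (b - a) / INR N).
assert (Hh : 0 < h) by (apply Rdiv_lt_0_compat; lra).
assert (HNh : a + INR N * h = b) by (unfold h; field; lra).
assert (Hhd : h < d).
{ unfold h. apply (Rmult_lt_reg_r (/ (b - a))); [apply Rinv_0_lt_compat; lra|].
  replace ((b - a) / INR N * / (b - a)) with (/ INR N) by (field; lra). exact HN. }
rewrite <- HNh. apply (eigen_frame_steps a b h); auto; [|lra].
intros s t Hs Ht Hst. repeat split; [apply U1 | apply U2 | apply U3]; auto; lra.
Qed.

Lemma finite_set (l : list R) : forall (P : R -> Prop), (forall z, P z -> In z l) ->
  exists Z, NoDup Z /\ forall z, In z Z <-> P z.
Proof.
induction l as [|a l IH]; intros P HP.
- exists nil; split; [constructor|]. intro z; split; [intros []|intro H; apply (HP z H)].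
- destruct (IH (fun z => P z /\ z <> a)) as [Z [HZ HZ']].
  { intros z [Hz Hza]. destruct (HP z Hz); [congruence|auto]. }
  destruct (classic (P a)) as [Pa|nPa].
  + exists (a :: Z); split.
    * constructor; auto. intro H; apply HZ' in H; tauto.
    * intro z; simpl; split.
      -- intros [<-|H]; auto. apply HZ' in H; tauto.
      -- intro Hz. destruct (Req_dec a z); auto. right; apply HZ'; auto.
  + exists Z; split; auto. intro z; rewrite HZ'; split; [tauto|].
    intro Hz; split; auto. intro; subst; tauto.
Qed.

Fixpoint prodZ (Z : list R) (t : R) : R :=
  match Z with nil => 1 | z :: Z' => (t - z) * prodZ Z' t end.

Lemma prodZ_nz Z t : ~ In t Z -> prodZ Z t <> 0.
Proof.
induction Z as [|z Z IH]; simpl; intros H; [lra|].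
apply Rmult_integral_contrapositive_currified; [intro; apply H; left; lra|].
apply IH; tauto.
Qed.

Lemma prodZ_lim Z D t : lim_in D t (prodZ Z) (prodZ Z t).
Proof.
induction Z as [|z Z IH]; simpl; [apply lim_in_const|].
apply lim_in_mult; auto. apply lim_in_minus; [apply lim_in_id | apply lim_in_const].
Qed.

Lemma prodZ_remove Z z t : NoDup Z -> In z Z ->
  prodZ Z t = (t - z) * prodZ (remove Req_EM_T z Z) t.
Proof.
induction Z as [|y Z IH]; simpl; intros ND Hin; [destruct Hin|].
inversion ND; subst. destruct (Req_EM_T z y) as [->|Hzy].
- rewrite notin_remove; auto.
- destruct Hin as [Hin|Hin]; [congruence|]. simpl. rewrite IH; auto. ring.
Qed.

Lemma finite_isolated Z t : exists d, 0 < d /\ forall z, In z Z -> z <> t -> d <= Rabs (z - t).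
Proof.
induction Z as [|y Z IH].
- exists 1; split; [lra|]. intros z [].
- destruct IH as [d [Hd H]]. destruct (Req_dec y t).
  + exists d; split; auto. intros z [<-|Hz] Hzt; [congruence|auto].
  + exists (Rmin d (Rabs (y - t))); split; [apply Rmin_pos; auto; apply Rabs_pos_lt; lra|].
    intros z [<-|Hz] Hzt; [apply Rmin_r|]. eapply Rle_trans; [apply Rmin_l | auto].
Qed.

(* [f] divided by prod_{z in Z} (t - z), continued at each z in Z by the value
   f'(z) / prod_{z' in Z, z' <> z} (z - z'), its limit there when f(z) = 0. *)
Definition desing (Z : list R) (f f' : R -> R) (t : R) : R :=
  if in_dec Req_EM_T t Z then f' t / prodZ (remove Req_EM_T t Z) t else f t / prodZ Z t.

Lemma desing_in Z f f' t : In t Z -> desing Z f f' t = f' t / prodZ (remove Req_EM_T t Z) t.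
Proof. intro H; unfold desing; destruct (in_dec Req_EM_T t Z); [reflexivity|contradiction]. Qed.

Lemma desing_out Z f f' t : ~ In t Z -> f t = prodZ Z t * desing Z f f' t.
Proof.
intro H; unfold desing; destruct (in_dec Req_EM_T t Z); [contradiction|].
field. apply prodZ_nz; exact H.
Qed.

Lemma desing_cont a b Z f f' : NoDup Z -> (forall z, In z Z -> f z = 0) ->
  Rcont_on a b f -> Rderiv_on a b f f' -> Rcont_on a b (desing Z f f').
Proof.
intros ND HZ Cf Df. apply cont_iff. intros t Ht.
destruct (finite_isolated Z t) as [d [Hd Hav]].
assert (Hout : forall s, Rabs (s - t) < d -> s <> t -> ~ In s Z).
{ intros s Hs Hst Hin. specialize (Hav s Hin Hst). lra. }
destruct (in_dec Req_EM_T t Z) as [Hin|Hnin].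
- apply lim_in_punctured. rewrite desing_in by auto.
  apply (lim_in_ext_loc _ _ (fun s => ((f s - f t) / (s - t)) / prodZ (remove Req_EM_T t Z) s)).
  + exists d; split; auto. intros s [Hs Hst] Hsd.
    assert (Hs' : ~ In s Z) by (apply Hout; auto).
    assert (~ In s (remove Req_EM_T t Z)) by (intro H; apply in_remove in H; tauto).
    assert (prodZ (remove Req_EM_T t Z) s <> 0) by (apply prodZ_nz; auto).
    unfold desing; destruct (in_dec Req_EM_T s Z); [contradiction|].
    rewrite (prodZ_remove Z t s ND Hin), (HZ t Hin). field; split; auto; lra.
  + apply lim_in_div; [rewrite deriv_iff in Df; apply Df; auto | apply prodZ_lim |].
    apply prodZ_nz, remove_In.
- unfold desing at 2; destruct (in_dec Req_EM_T t Z); [contradiction|].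
  apply (lim_in_ext_loc _ _ (fun s => f s / prodZ Z s)).
  + exists d; split; auto. intros s Hs Hsd. unfold desing.
    destruct (in_dec Req_EM_T s Z) as [HsZ|]; [|reflexivity].
    destruct (Req_dec s t) as [->|Hst]; [contradiction | exfalso; exact (Hout s Hsd Hst HsZ)].
  + apply lim_in_div; [rewrite cont_iff in Cf; apply Cf; auto | apply prodZ_lim | apply prodZ_nz; auto].
Qed.

Lemma unit_direction a b w1 w2 w3 :
  Rcont_on a b w1 -> Rcont_on a b w2 -> Rcont_on a b w3 ->
  (forall t, Icc a b t -> w1 t <> 0 \/ w2 t <> 0 \/ w3 t <> 0) ->
  exists m1 m2 m3, Rcont_on a b m1 /\ Rcont_on a b m2 /\ Rcont_on a b m3 /\
    forall t, Icc a b t -> unit3 (m1 t) (m2 t) (m3 t) /\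
      exists r, w1 t = r * m1 t /\ w2 t = r * m2 t /\ w3 t = r * m3 t.
Proof.
intros C1 C2 C3 Hnz.
set (S := fun t => w1 t * w1 t + w2 t * w2 t + w3 t * w3 t).
assert (HS : forall t, Icc a b t -> 0 < S t).
{ intros t Ht. unfold S. destruct (Hnz t Ht) as [H|[H|H]]; nra. }
assert (HSn : forall t, Icc a b t -> sqrt (S t) <> 0)
  by (intros t Ht; apply Rgt_not_eq, sqrt_lt_R0, HS; auto).
rewrite cont_iff in C1, C2, C3.
assert (LS : forall t, Icc a b t -> lim_in (Icc a b) t (fun s => sqrt (S s)) (sqrt (S t))).
{ intros t Ht. apply lim_in_sqrt; [|apply HS; auto].
  specialize (C1 t Ht); specialize (C2 t Ht); specialize (C3 t Ht). unfold S; lim_tac. }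
exists (fun t => w1 t / sqrt (S t)), (fun t => w2 t / sqrt (S t)), (fun t => w3 t / sqrt (S t)).
refine (conj _ (conj _ (conj _ _)));
  try (apply cont_iff; intros t Ht; apply lim_in_div; auto).
intros t Ht. pose proof (HS t Ht); pose proof (HSn t Ht). split.
- unfold unit3. transitivity (S t / (sqrt (S t) * sqrt (S t))); [unfold S; field; auto|].
  rewrite sqrt_sqrt by lra. field; lra.
- exists (sqrt (S t)). repeat split; field; auto.
Qed.

(* Near a zero z, f(t) / (t - z) extends continuously by f'(z) <> 0. *)
Lemma direction_field a b f1 f2 f3 g1 g2 g3 (l : list R) :
  Rcont_on a b f1 -> Rcont_on a b f2 -> Rcont_on a b f3 ->
  Rderiv_on a b f1 g1 -> Rderiv_on a b f2 g2 -> Rderiv_on a b f3 g3 ->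
  (forall t, Icc a b t -> f1 t = 0 -> f2 t = 0 -> f3 t = 0 -> In t l) ->
  (forall t, Icc a b t -> f1 t = 0 -> f2 t = 0 -> f3 t = 0 ->
     g1 t <> 0 \/ g2 t <> 0 \/ g3 t <> 0) ->
  exists m1 m2 m3, Rcont_on a b m1 /\ Rcont_on a b m2 /\ Rcont_on a b m3 /\
    forall t, Icc a b t -> unit3 (m1 t) (m2 t) (m3 t) /\
      exists mu, f1 t = mu * m1 t /\ f2 t = mu * m2 t /\ f3 t = mu * m3 t.
Proof.
intros C1 C2 C3 D1 D2 D3 Hl Hg.
destruct (finite_set l (fun z => Icc a b z /\ f1 z = 0 /\ f2 z = 0 /\ f3 z = 0))
  as [Z [NDZ HZ]]; [intros z (Hz & H1 & H2 & H3); apply Hl; auto|].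
assert (HZ0 : forall z, In z Z -> f1 z = 0 /\ f2 z = 0 /\ f3 z = 0) by (intros z Hz; apply HZ; auto).
assert (Hnz : forall t, Icc a b t ->
  desing Z f1 g1 t <> 0 \/ desing Z f2 g2 t <> 0 \/ desing Z f3 g3 t <> 0).
{ intros t Ht. destruct (in_dec Req_EM_T t Z) as [Hin|Hnin].
  - rewrite !desing_in by exact Hin.
    assert (Hc : / prodZ (remove Req_EM_T t Z) t <> 0)
      by apply Rinv_neq_0_compat, prodZ_nz, remove_In.
    destruct (HZ0 t Hin) as (H1 & H2 & H3).
    destruct (Hg t Ht H1 H2 H3) as [G|[G|G]]; [left|right; left|right; right];
      apply Rmult_integral_contrapositive_currified; auto.
  - destruct (Req_dec (desing Z f1 g1 t) 0) as [E1|]; [|left; auto].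
    destruct (Req_dec (desing Z f2 g2 t) 0) as [E2|]; [|right; left; auto].
    destruct (Req_dec (desing Z f3 g3 t) 0) as [E3|]; [|right; right; auto].
    exfalso. apply Hnin, HZ.
    rewrite (desing_out Z f1 g1 t Hnin), (desing_out Z f2 g2 t Hnin),
      (desing_out Z f3 g3 t Hnin), E1, E2, E3, Rmult_0_r. auto. }
destruct (unit_direction a b (desing Z f1 g1) (desing Z f2 g2) (desing Z f3 g3))
  as [m1 [m2 [m3 [Cm1 [Cm2 [Cm3 Hm]]]]]]; auto;
  try (apply desing_cont; auto; intros z Hz; apply HZ0; auto).
exists m1, m2, m3. refine (conj Cm1 (conj Cm2 (conj Cm3 _))).
intros t Ht. split; [apply Hm; exact Ht|].
destruct (proj2 (Hm t Ht)) as [r (E1 & E2 & E3)].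
destruct (in_dec Req_EM_T t Z) as [Hin|Hnin].
- exists 0. destruct (HZ0 t Hin) as (H1 & H2 & H3). rewrite H1, H2, H3. repeat split; ring.
- exists (prodZ Z t * r).
  rewrite (desing_out Z f1 g1 t Hnin), (desing_out Z f2 g2 t Hnin),
    (desing_out Z f3 g3 t Hnin), E1, E2, E3. repeat split; ring.
Qed.

Lemma Cpx_ext z w : re z = re w -> im z = im w -> z = w.
Proof. destruct z, w; simpl; intros; subst; reflexivity. Qed.

Lemma M2_ext X Y : e11 X = e11 Y -> e12 X = e12 Y -> e21 X = e21 Y -> e22 X = e22 Y -> X = Y.
Proof. destruct X, Y; simpl; intros; subst; reflexivity. Qed.

Lemma Cmul_cancel z w v : v <> C0 -> Cmul z v = Cmul w v -> z = w.
Proof.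
destruct z as [x y], w as [x' y'], v as [p q]; unfold Cmul, C0; simpl; intros Hv E.
injection E as E1 E2.
assert (Hn : p * p + q * q <> 0).
{ intro H0. apply Hv. assert (p = 0) by nra. assert (q = 0) by nra. subst; reflexivity. }
assert (Hr : (x - x') * (p * p + q * q) = 0).
{ transitivity (p * (x * p - y * q - (x' * p - y' * q)) + q * (x * q + y * p - (x' * q + y' * p)));
    [ring | rewrite E1, E2; ring]. }
assert (Hi : (y - y') * (p * p + q * q) = 0).
{ transitivity (p * (x * q + y * p - (x' * q + y' * p)) - q * (x * p - y * q - (x' * p - y' * q)));
    [ring | rewrite E1, E2; ring]. }
apply Rmult_integral in Hr, Hi.
apply Cpx_ext; simpl; destruct Hr, Hi; lra.
Qed.

Lemma eigenvalue_scalar c lam : eigenvalue (mkM2 c C0 C0 c) lam -> lam = c.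
Proof.
intros [v1 [v2 [Hv [E1 E2]]]]; simpl in E1, E2.
assert (Hsimpl : forall z w, Cadd (Cmul C0 z) (Cmul c w) = Cmul c w /\
                             Cadd (Cmul c z) (Cmul C0 w) = Cmul c z).
{ intros z w; split; apply Cpx_ext; unfold Cadd, Cmul, C0; simpl; ring. }
rewrite (proj2 (Hsimpl v1 v2)) in E1. rewrite (proj1 (Hsimpl v1 v2)) in E2.
destruct Hv as [Hv|Hv]; symmetry; eapply Cmul_cancel; eauto.
Qed.

(* A hermitian X is determined by its half-trace [hmean X] and its traceless part,
   the real triple (hdiff X, Re X12, Im X12). *)
Definition hmean (X : M2) : R := (re (e11 X) + re (e22 X)) / 2.
Definition hdiff (X : M2) : R := (re (e11 X) - re (e22 X)) / 2.

Lemma hermitian_iff X : hermitian X <->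
  im (e11 X) = 0 /\ im (e22 X) = 0 /\ re (e21 X) = re (e12 X) /\ im (e21 X) = - im (e12 X).
Proof.
unfold hermitian; split; intro H.
- assert (H11 := f_equal (fun Y => im (e11 Y)) H). assert (H22 := f_equal (fun Y => im (e22 Y)) H).
  assert (H21r := f_equal (fun Y => re (e21 Y)) H). assert (H21i := f_equal (fun Y => im (e21 Y)) H).
  simpl in *. repeat split; lra.
- destruct H as (H11 & H22 & H21r & H21i).
  apply M2_ext; apply Cpx_ext; simpl; lra.
Qed.

Lemma hermitian_scalar_not_two X : hermitian X ->
  hdiff X = 0 -> re (e12 X) = 0 -> im (e12 X) = 0 -> ~ two_distinct_eigenvalues X.
Proof.
rewrite hermitian_iff; unfold hdiff; intros (H11 & H22 & H21r & H21i) Hd Hx Hy [l1 [l2 [Hne [E1 E2]]]].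
assert (HX : X = mkM2 (e11 X) C0 C0 (e11 X))
  by (apply M2_ext; apply Cpx_ext; simpl; lra).
rewrite HX in E1, E2. apply Hne.
rewrite (eigenvalue_scalar _ _ E1), (eigenvalue_scalar _ _ E2). reflexivity.
Qed.

Lemma hermitian_two_traceless X : hermitian X -> two_distinct_eigenvalues X ->
  hdiff X <> 0 \/ re (e12 X) <> 0 \/ im (e12 X) <> 0.
Proof.
intros HX H2.
destruct (Req_dec (hdiff X) 0) as [Hd|]; [|left; auto].
destruct (Req_dec (re (e12 X)) 0) as [Hx|]; [|right; left; auto].
destruct (Req_dec (im (e12 X)) 0) as [Hy|]; [|right; right; auto].
exfalso. exact (hermitian_scalar_not_two X HX Hd Hx Hy H2).
Qed.

Lemma hermitian_deriv a b A A' t : a < b -> Icc a b t ->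
  (forall s, Icc a b s -> hermitian (A s)) -> M2deriv_on a b A A' -> hermitian (A' t).
Proof.
intros Hab Ht HH [[D11r D11i] [[D12r D12i] [[D21r D21i] [D22r D22i]]]].
assert (HHs : forall s, Icc a b s -> im (e11 (A s)) = 0 /\ im (e22 (A s)) = 0 /\
                re (e21 (A s)) = re (e12 (A s)) /\ im (e21 (A s)) = - im (e12 (A s)))
  by (intros s Hs; apply hermitian_iff, HH, Hs).
apply hermitian_iff. simpl in *. repeat split.
- rewrite (deriv_scal_unique a b _ _ _ _ 0 t Hab Ht D11i D11i); [ring|].
  intros s Hs; rewrite (proj1 (HHs s Hs)); ring.
- rewrite (deriv_scal_unique a b _ _ _ _ 0 t Hab Ht D22i D22i); [ring|].
  intros s Hs; rewrite (proj1 (proj2 (HHs s Hs))); ring.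
- rewrite (deriv_scal_unique a b _ _ _ _ 1 t Hab Ht D21r D12r); [ring|].
  intros s Hs; rewrite (proj1 (proj2 (proj2 (HHs s Hs)))); ring.
- rewrite (deriv_scal_unique a b _ _ _ _ (-1) t Hab Ht D21i D12i); [ring|].
  intros s Hs; rewrite (proj2 (proj2 (proj2 (HHs s Hs)))); ring.
Qed.

Definition spin_matrix (s mu m1 m2 m3 : R) : M2 :=
  mkM2 (mkC (s + mu * m1) 0) (mkC (mu * m2) (mu * m3))
       (mkC (mu * m2) (- (mu * m3))) (mkC (s - mu * m1) 0).

Lemma hermitian_spin_matrix X mu m1 m2 m3 : hermitian X ->
  hdiff X = mu * m1 -> re (e12 X) = mu * m2 -> im (e12 X) = mu * m3 ->
  X = spin_matrix (hmean X) mu m1 m2 m3.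
Proof.
rewrite hermitian_iff; unfold hdiff, hmean; intros (H11 & H22 & H21r & H21i) Hd Hx Hy.
apply M2_ext; apply Cpx_ext; simpl; lra.
Qed.

Definition Umat (w : spinor) : M2 :=
  mkM2 (mkC (ur w) (ui w)) (mkC (- vr w) (vi w)) (mkC (vr w) (vi w)) (mkC (ur w) (- ui w)).

Lemma Umat_unitary w : snorm2 w = 1 -> unitary (Umat w).
Proof.
destruct w as [x1 x2 y1 y2].
unfold snorm2, sdot, unitary, Umat, M2mul, M2adj, M2id, Cadd, Cmul, Cconj, C1, C0; simpl.
intro H. f_equal; apply Cpx_ext; simpl; try ring; rewrite <- H; ring.
Qed.

Lemma Umat_cont a b w : Scont_on a b w -> M2cont_on a b (fun t => Umat (w t)).
Proof.
intros (C1 & C2 & C3 & C4). unfold M2cont_on, Ccont_on, Umat; simpl.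
repeat split; auto; apply cont_opp; auto.
Qed.

Lemma Umat_diagonalizes s mu m1 m2 m3 w : sigma m1 m2 m3 w = w ->
  diagonal (M2mul (M2mul (M2adj (Umat w)) (spin_matrix s mu m1 m2 m3)) (Umat w)).
Proof.
destruct w as [x1 x2 y1 y2]; intro He.
assert (E1 := f_equal ur He); assert (E2 := f_equal ui He);
assert (E3 := f_equal vr He); assert (E4 := f_equal vi He); simpl in *.
set (r1 := m1 * x1 + m2 * y1 - m3 * y2 - x1) in *.
set (i1 := m1 * x2 + m2 * y2 + m3 * y1 - x2) in *.
set (r2 := m2 * x1 + m3 * x2 - m1 * y1 - y1) in *.
set (i2 := m2 * x2 - m3 * x1 - m1 * y2 - y2) in *.
assert (Z1 : r1 = 0) by (unfold r1; lra). assert (Z2 : i1 = 0) by (unfold i1; lra).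
assert (Z3 : r2 = 0) by (unfold r2; lra). assert (Z4 : i2 = 0) by (unfold i2; lra).
unfold diagonal; split; apply Cpx_ext; simpl.
- transitivity (mu * ((x1 * r2 - x2 * i2) - (y1 * r1 - y2 * i1)));
    [unfold r1, i1, r2, i2; ring | rewrite Z1, Z2, Z3, Z4; ring].
- transitivity (mu * (- (x1 * i2 + x2 * r2) + (y1 * i1 + y2 * r1)));
    [unfold r1, i1, r2, i2; ring | rewrite Z1, Z2, Z3, Z4; ring].
- transitivity (mu * ((x1 * r2 - x2 * i2) - (y1 * r1 - y2 * i1)));
    [unfold r1, i1, r2, i2; ring | rewrite Z1, Z2, Z3, Z4; ring].
- transitivity (- (mu * (- (x1 * i2 + x2 * r2) + (y1 * i1 + y2 * r1))));
    [unfold r1, i1, r2, i2; ring | rewrite Z1, Z2, Z3, Z4; ring].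
Qed.

Theorem mainTheorem4 (a b : R) (A A' : R -> M2) :
  a < b ->
  M2cont_on a b A ->
  (forall t, a <= t <= b -> hermitian (A t)) ->
  M2deriv_on a b A A' ->
  M2cont_on a b A' ->
  (exists l : list R, forall t, a <= t <= b ->
      ~ two_distinct_eigenvalues (A t) -> In t l) ->
  (forall t, a <= t <= b ->
      ~ two_distinct_eigenvalues (A t) -> two_distinct_eigenvalues (A' t)) ->
  exists U : R -> M2, M2cont_on a b U /\
    forall t, a <= t <= b ->
      unitary (U t) /\ diagonal (M2mul (M2mul (M2adj (U t)) (A t)) (U t)).
Proof.
intros Hab CA HH DA _ [l Hl] Hex.
pose proof CA as [[C11 _] [[C12r C12i] [_ [C22 _]]]].
pose proof DA as [[D11 _] [[D12r D12i] [_ [D22 _]]]].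
assert (Hzeros : forall t, Icc a b t ->
          hdiff (A t) = 0 -> re (e12 (A t)) = 0 -> im (e12 (A t)) = 0 -> In t l).
{ intros t Ht Hd Hx Hy. apply Hl; [exact Ht|]. apply hermitian_scalar_not_two; auto. }
assert (Hnondeg : forall t, Icc a b t ->
          hdiff (A t) = 0 -> re (e12 (A t)) = 0 -> im (e12 (A t)) = 0 ->
          hdiff (A' t) <> 0 \/ re (e12 (A' t)) <> 0 \/ im (e12 (A' t)) <> 0).
{ intros t Ht Hd Hx Hy.
  apply (hermitian_two_traceless _ (hermitian_deriv a b A A' t Hab Ht HH DA)).
  apply Hex; [exact Ht|]. apply hermitian_scalar_not_two; auto. }
destruct (direction_field a b _ _ _ _ _ _ l (cont_halfdiff _ _ _ _ C11 C22) C12r C12i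
            (deriv_halfdiff _ _ _ _ _ _ D11 D22) D12r D12i Hzeros Hnondeg)
  as [m1 [m2 [m3 [Cm1 [Cm2 [Cm3 Hm]]]]]].
(* Lift m to a continuous eigenvector field w; then U = Umat w works since A = s I + mu sigma(m). *)
destruct (eigen_frame_exists a b m1 m2 m3 Hab Cm1 Cm2 Cm3 (fun t Ht => proj1 (Hm t Ht)))
  as [w [Cw Hw]].
exists (fun t => Umat (w t)). split; [apply Umat_cont; exact Cw|].
intros t Ht. destruct (Hw t Ht) as [Hn He]. split; [apply Umat_unitary; exact Hn|].
destruct (proj2 (Hm t Ht)) as [mu (E1 & E2 & E3)].
rewrite (hermitian_spin_matrix (A t) mu (m1 t) (m2 t) (m3 t) (HH t Ht) E1 E2 E3).
apply Umat_diagonalizes; exact He.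
Qed.
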